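(* Let $n\geq 3$ and let $\ast_n$ be the star graph. Then for every subgroup $G$ of $Homeo(\ast_n)$ we have $h(G,\ast_n)\geq 2$; moreover $h(Homeo(\ast_n),\ast_n)=2$.
   Context: For $n\geq 3$, the star graph $\ast_n$ is the topological graph with $n+1$ vertices $0,1,\ldots,n$ and $n$ edges $[0,1],[0,2],\ldots,[0,n]$, i.e. the union of $n$ arcs, the $i$-th having end points $0$ and $i$, any two of which meet only at the common end point $0$. For a topological space $A$, $Homeo(A)$ denotes the group of all homeomorphisms $A\to A$ under composition. For a subgroup $G$ of $Homeo(A)$ (acting by $gx=g(x)$), a nonempty subset $Y\subseteq A$ is invariant if $g(y)\in Y$ for all $g\in G$, $y\in Y$. The height of $(G,A)$ is $h(G,A)=\sup\{n\geq 0:$ there exist distinct closed invariant subsets $Y_0\subset Y_1\subset\cdots\subset Y_n=A\}$ (possibly $+\infty$). *)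

From HB Require Import structures.
From mathcomp Require Import all_boot all_order all_algebra.
From mathcomp Require Import all_classical all_reals all_analysis.
Set Implicit Arguments. Unset Strict Implicit. Unset Printing Implicit Defensive.
Import Order.TTheory GRing.Theory Num.Theory.
Import numFieldNormedType.Exports.
Local Open Scope classical_set_scope.
Local Open Scope ring_scope.

(* The star graph *_n, realized concretely in R^n (row vectors) as the union
   of the n segments [0, e_i], i < n, with the subspace topology.  The
   vertex 0 is the origin and vertex i+1 is the basis vector e_i. *)
Definition star_set (R : realType) (n : nat) : set 'rV[R]_n :=
  [set x | exists (i : 'I_n) (t : R), 0 <= t <= 1 /\ x = t *: delta_mx 0 i].

Notation star R n := (set_type (@star_set R n)).

Definition homeo (T : topologicalType) (f : T -> T) : Prop :=
  continuous f /\
  exists g : T -> T, [/\ cancel f g, cancel g f & continuous g].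

Definition homeo_subgroup (T : topologicalType) (G : set (T -> T)) : Prop :=
  [/\ (forall f, G f -> homeo f),
      G id,
      (forall f g, G f -> G g -> G (f \o g)) &
      (forall f, G f -> exists2 g, G g & cancel f g /\ cancel g f)].

Definition Homeo (T : topologicalType) : set (T -> T) := [set f | homeo f].

Definition invariant (T : topologicalType) (G : set (T -> T)) (Y : set T) : Prop :=
  Y !=set0 /\ (forall g y, G g -> Y y -> Y (g y)).

Definition has_chain (T : topologicalType) (G : set (T -> T)) (m : nat) : Prop :=
  exists Y : nat -> set T,
    [/\ (forall i, (i <= m)%N -> closed (Y i) /\ invariant G (Y i)),
        (forall i, (i < m)%N -> Y i `<` Y i.+1) &
        Y m = setT].

(* h(G,T) >= k, where h is the supremum of the lengths of such chains. *)
Definition height_ge (T : topologicalType) (G : set (T -> T)) (k : nat) : Prop :=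
  exists m, (k <= m)%N /\ has_chain G m.

Definition height_eq (T : topologicalType) (G : set (T -> T)) (k : nat) : Prop :=
  height_ge G k /\ (forall m, has_chain G m -> (m <= k)%N).

From Pilot Require Import Defs.
From HB Require Import structures.
From mathcomp Require Import all_boot all_order all_algebra.
From mathcomp Require Import all_classical all_reals all_analysis.
Import numFieldNormedType.Exports.
From mathcomp Require Import perm ring lra zify.

(* A homeomorphism f preserves the relation "x separates a from b" (a and b
   lie in different parts of an open partition of the complement of x).  An
   endpoint of *_n separates nothing while every other point separates
   something, so f permutes the endpoints.  The origin separates any two of the
   n >= 3 endpoints, whereas the complement of a point inside an arm has only
   two parts, so that point cannot separate three points pairwise: f fixes the
   origin.  Hence {0} < {0} + endpoints < *_n is a chain of closed invariant
   sets for every subgroup G.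
   Conversely, the full homeomorphism group moves any point inside an arm to
   any other one (stretch an arm piecewise linearly, swap two arms), so a closed
   invariant set meeting the inside of an arm contains a dense subset of *_n,
   hence is everything.  A proper closed invariant set is thus {0}, the set of
   endpoints, or their union; the first two are incomparable, so no chain has
   length 3. *)

Set Implicit Arguments. Unset Strict Implicit. Unset Printing Implicit Defensive.
Import Order.TTheory GRing.Theory Num.Theory.
Local Open Scope classical_set_scope.
Local Open Scope ring_scope.

Section separation.
Context {T : topologicalType}.

Definition separates (x a b : T) := exists U V : set T,
  [/\ open U, open V, U `&` V = set0, (forall z, z <> x -> U z \/ V z) & U a /\ V b].

Lemma open_disjoint_separated (U V : set T) :
  open U -> open V -> U `&` V = set0 -> separated U V.
Proof.
move=> oU oV UV; split; apply/seteqP; split => // x [].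
- move=> cUx Vx; have [y [Uy Vy]] := cUx V (open_nbhs_nbhs (conj oV Vx)).
  by have : (U `&` V) y by []; rewrite UV.
- move=> Ux cVx; have [y [Vy Uy]] := cVx U (open_nbhs_nbhs (conj oU Ux)).
  by have : (U `&` V) y by []; rewrite UV.
Qed.

Lemma separates_side x a b : separates x a b -> exists U : set T, [/\ U a, ~ U b &
  forall C p q, connected C -> ~ C x -> C p -> C q -> U p -> U q].
Proof.
move=> [U [V [oU oV UV cov [Ua Vb]]]]; exists U; split => //.
- by move=> Ub; have : (U `&` V) b by []; rewrite UV.
- move=> C p q cC Cx Cp Cq Up.
  have CUV : C `<=` U `|` V by move=> z Cz; apply: cov => zx; apply: Cx; rewrite -zx.
  have [CU|CV] := connected_subset (open_disjoint_separated oU oV UV) CUV cC.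
    exact: CU.
  have : (U `&` V) p by split => //; apply: CV.
  by rewrite UV.
Qed.

Lemma homeoV (f : T -> T) : homeo f ->
  exists g : T -> T, [/\ homeo g, cancel f g & cancel g f].
Proof. by move=> [cf [g [fg gf cg]]]; exists g; split => //; split => //; exists f. Qed.

Lemma homeo_separates (f : T -> T) x a b : homeo f ->
  separates x a b -> separates (f x) (f a) (f b).
Proof.
move=> [_ [g [fg gf cg]]] [U [V [oU oV UV cov [Ua Vb]]]].
exists (g @^-1` U), (g @^-1` V); split.
- by move/continuousP: cg; apply.
- by move/continuousP: cg; apply.
- apply/seteqP; split => // z [/= Uz Vz].
  by have : (U `&` V) (g z) by []; rewrite UV.
- by move=> z zx; apply: cov => gzx; apply: zx; rewrite -gzx gf.
- by rewrite /= !fg.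
Qed.

Lemma homeo_subgroup_Homeo : homeo_subgroup (@Homeo T).
Proof.
split => //.
- by split; [move=> x; exact: cvg_id|exists id; split => // x; exact: cvg_id].
- move=> f g [cf [f' [ff' f'f cf']]] [cg [g' [gg' g'g cg']]]; split.
    by move=> x; apply: continuous_comp; [exact: cg|exact: cf].
  exists (g' \o f'); split => [x /=|x /=|x]; first by rewrite ff' gg'.
    by rewrite g'g f'f.
  by apply: continuous_comp; [exact: cf'|exact: cg'].
- by move=> f /homeoV[g [hg fg gf]]; exists g.
Qed.

End separation.

Lemma set_type_finite_closed {X : topologicalType} (A : set X) (F : set A) :
  accessible_space X -> finite_set F -> closed F.
Proof.
move=> acc fF; have -> : F = set_val @^-1` (set_val @` F).
  by apply/seteqP; split => [z Fz|z [w Fw /val_inj <-]] //=; exists z.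
apply: preimage_closed => [x _|]; first exact: initial_continuous.
by apply: accessible_finite_set_closed.1 => //; exact: finite_image.
Qed.

Section unit_interval.
Variable R : realType.
Implicit Types s t r : R.

Definition clamp01 t : R := Num.min (Num.max t 0) 1.

Lemma clamp01_id t : 0 <= t <= 1 -> clamp01 t = t.
Proof. by case/andP=> t0 t1; rewrite /clamp01 (max_idPl t0) (min_idPl t1). Qed.

Lemma clamp01_ge0 t : 0 <= clamp01 t.
Proof. by rewrite /clamp01 le_min le_max lexx orbT ler01. Qed.

Lemma clamp01_le1 t : clamp01 t <= 1.
Proof. by rewrite /clamp01 ge_min lexx orbT. Qed.

Lemma clamp01_0 : clamp01 0 = 0.
Proof. by rewrite clamp01_id // lexx ler01. Qed.

Lemma clamp01_1 : clamp01 1 = 1.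
Proof. by rewrite clamp01_id // lexx ler01. Qed.

Lemma continuous_clamp01 : continuous clamp01.
Proof.
move=> x; apply: (@continuous_min R R (fun t => Num.max t 0) (fun _ => 1) x).
  by apply: (@continuous_max R R id (fun _ => 0)); [exact: cvg_id|exact: cvg_cst].
exact: cvg_cst.
Qed.

Lemma open_meets_oo01 (O : set R) s : open O -> O s -> 0 <= s <= 1 ->
  exists r, 0 < r < 1 /\ O r.
Proof.
move=> oO Os /andP[s0 s1].
have /nbhs_ballP [e e0 sub] : nbhs s O by exact: open_nbhs_nbhs.
pose d := Num.min 1 e.
have d0 : 0 < d by rewrite lt_min ltr01 e0.
have d1 : d <= 1 by rewrite ge_min lexx.
have de : d <= e by rewrite ge_min lexx orbT.
(* r lies at fraction d of the way from s to 1/2 *)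
pose r := (1 - d) * s + d / 2.
exists r; split; first by apply/andP; split; rewrite /r; nra.
apply: sub; rewrite -ball_normE /=.
have -> : s - r = d * (s - 1/2) by rewrite /r; field.
rewrite normrM (gtr0_norm d0).
have : `|s - 1/2| <= 1/2 by rewrite ler_norml; apply/andP; split; lra.
nra.
Qed.

Definition pwlin s t r : R :=
  if r <= s then r * (t / s) else t + (r - s) * ((1 - t) / (1 - s)).

Variables (s t : R).
Hypotheses (hs : 0 < s < 1) (ht : 0 < t < 1).

Let slope_lo : 0 < t / s.
Proof. by case/andP: hs => s0 _; case/andP: ht => t0 _; rewrite divr_gt0. Qed.

Let slope_hi : 0 < (1 - t) / (1 - s).
Proof. by case/andP: hs => _ s1; case/andP: ht => _ t1; rewrite divr_gt0 // subr_gt0. Qed.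

Let slope_loE : s * (t / s) = t.
Proof. by case/andP: hs => s0 _; rewrite mulrC divfK // gt_eqF. Qed.

Let slope_hiE : (1 - s) * ((1 - t) / (1 - s)) = 1 - t.
Proof. by case/andP: hs => _ s1; rewrite mulrC divfK // subr_eq0 eq_sym lt_eqF. Qed.

Lemma pwlin_s : pwlin s t s = t.
Proof. by rewrite /pwlin lexx. Qed.

Lemma pwlin_0 : pwlin s t 0 = 0.
Proof. by case/andP: hs => s0 _; rewrite /pwlin (ltW s0) mul0r. Qed.

Lemma pwlin_ge0_le1 r : 0 <= r <= 1 -> 0 <= pwlin s t r <= 1.
Proof.
move=> /andP[r0 r1]; have [s0 s1] := andP hs; have [t0 t1] := andP ht.
move: slope_lo slope_hi slope_loE slope_hiE; rewrite /pwlin.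
move: (t / s) ((1 - t) / (1 - s)) => a b a0 b0 ea eb.
by case: (lerP r s) => rs; apply/andP; split; nra.
Qed.

Lemma pwlinK : cancel (pwlin s t) (pwlin t s).
Proof.
move=> r; have [s0 s1] := andP hs; have [t0 t1] := andP ht.
rewrite /pwlin; case: (lerP r s) => rs.
  have -> : r * (t / s) <= t by have := ler_wpM2r (ltW slope_lo) rs; rewrite slope_loE.
  by field; rewrite !gt_eqF.
have -> : (t + (r - s) * ((1 - t) / (1 - s)) <= t) = false.
  by apply/negbTE; rewrite -ltNge ltrDl mulr_gt0 // subr_gt0.
by field; rewrite !subr_eq0 !(eq_sym 1) !lt_eqF.
Qed.

Lemma continuous_pwlin : continuous (pwlin s t).
Proof.
have [s0 s1] := andP hs; have [t0 t1] := andP ht.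
have lin c d : continuous (fun r : R => c + r * d).
  move=> x; have xd : {for x, continuous (fun r : R => r * d)}.
    by have := @continuousM R R id (cst d) x (@cvg_id _ _) (cvg_cst d); exact.
  by have := @continuousD R R^o R (cst c) _ x (cvg_cst c) xd; exact.
move: slope_loE slope_hiE; rewrite /pwlin.
move: (t / s) ((1 - t) / (1 - s)) => a b ea eb.
have e1 r : r * a = 0 + r * a by rewrite add0r.
have e2 r : t + (r - s) * b = (t - s * b) + r * b by ring.
(* the two linear pieces cross at s, so pwlin is their min or their max *)
have cross : s * (1 - s) * (a - b) = t - s.
  transitivity ((1 - s) * (s * a) - s * ((1 - s) * b)); first ring.
  by rewrite ea eb; ring.
have ps : 0 < s * (1 - s) by rewrite mulr_gt0 // subr_gt0.
have [st|ts] := lerP s t.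
- have ab : 0 <= a - b by rewrite -(pmulr_rge0 _ ps) cross subr_ge0.
  suff -> : (fun r => if r <= s then r * a else t + (r - s) * b) =
            (fun r => 0 + r * a) \min (fun r => (t - s * b) + r * b).
    by move=> x; apply: continuous_min; apply: lin.
  apply/funext => r /=; rewrite -e1 -e2.
  by case: (lerP r s) => rs; [rewrite min_l|rewrite min_r]; nra.
- have ab : a - b < 0 by rewrite -(pmulr_rlt0 _ ps) cross subr_lt0.
  suff -> : (fun r => if r <= s then r * a else t + (r - s) * b) =
            (fun r => 0 + r * a) \max (fun r => (t - s * b) + r * b).
    by move=> x; apply: continuous_max; apply: lin.
  apply/funext => r /=; rewrite -e1 -e2.
  by case: (lerP r s) => rs; [rewrite max_l|rewrite max_r]; nra.
Qed.

End unit_interval.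

Section star_arms.
Variables (R : realType) (n : nat).
Local Notation T := (star R n).
Local Notation V := 'rV[R]_n.
Implicit Types (i j k : 'I_n) (s t r : R).

Lemma scale_delta_entry (c : R) k l : (c *: delta_mx 0 k : V) 0 l = if l == k then c else 0.
Proof. by rewrite !mxE eqxx /=; case: (l == k); rewrite ?mulr1 ?mulr0. Qed.

Lemma arm_subproof i t : clamp01 t *: delta_mx 0 i \in @star_set R n.
Proof. by apply/mem_set; exists i, (clamp01 t); rewrite clamp01_ge0 clamp01_le1. Qed.

(* Total parametrisation of the i-th arm, constant outside [0, 1]. *)
Definition arm i t : T := exist _ (clamp01 t *: delta_mx 0 i) (arm_subproof i t).

Lemma arm_entry i t k : val (arm i t) 0 k = if k == i then clamp01 t else 0.
Proof. exact: scale_delta_entry. Qed.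

Lemma armP (x : T) : exists i t, 0 <= t <= 1 /\ x = arm i t.
Proof.
case: x => v hv; have [i [t [t01 vE]]] := set_mem hv.
by exists i, t; split => //; apply: val_inj; rewrite /= clamp01_id.
Qed.

Lemma arm0 i j : arm i 0 = arm j 0.
Proof. by apply: val_inj; rewrite /= clamp01_0 !scale0r. Qed.

Lemma arm_inj i j t s : arm i t = arm j s -> 0 < clamp01 t ->
  i = j /\ clamp01 t = clamp01 s.
Proof.
move=> /(congr1 (fun x : T => val x 0 i)); rewrite !arm_entry eqxx.
by case: eqP => [->//|_ ->]; rewrite ltxx.
Qed.

Lemma arm_neq i j t s : 0 < clamp01 t -> clamp01 t != clamp01 s -> arm i t <> arm j s.
Proof. by move=> t0 + /arm_inj-/(_ t0)[_ E]; rewrite E eqxx. Qed.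

Lemma continuous_arm i : continuous (arm i).
Proof.
apply: continuous_comp_initial => x /=.
by apply: continuousZr_tmp; exact: continuous_clamp01.
Qed.

Lemma continuous_val_entry k : continuous (fun z : T => val z 0 k).
Proof.
have cval : continuous (val : T -> V) by exact: initial_continuous.
move=> z; exact: (continuous_comp (cval z) (@coord_continuous R 1 n 0 k (val z))).
Qed.

Definition arm_segment i u v : set T := arm i @` [set r | u <= r <= v].

Lemma arm_segment_connected i u v : connected (arm_segment i u v).
Proof.
apply: connected_continuous_connected; last exact/continuous_subspaceT/continuous_arm.
apply/connected_intervalP => x y /andP[ux _] /andP[_ yv] z /andP[xz zy].
by apply/andP; split; [exact: le_trans ux xz|exact: le_trans zy yv].
Qed.

Lemma arm_segment_mem i u v r : u <= r <= v -> arm_segment i u v (arm i r).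
Proof. by move=> h; exists r. Qed.

Lemma arm_segment0 i s : 0 <= s -> arm_segment i 0 s (arm i 0) /\ arm_segment i 0 s (arm i s).
Proof. by move=> s0; split; apply: arm_segment_mem; rewrite lexx s0. Qed.

(* Every point below arm i t (on another arm, or lower on arm i) is joined to
   the origin by a segment avoiding arm i t. *)
Lemma not_separates_below i t j s k r : 0 < t <= 1 -> 0 <= s <= 1 -> 0 <= r <= 1 ->
  (j != i \/ s < t) -> (k != i \/ r < t) -> ~ separates (arm i t) (arm j s) (arm k r).
Proof.
move=> /andP[t0 t1] /andP[s0 s1] /andP[r0 r1] hj hk /separates_side[U [Ua Ub side]].
have clt : clamp01 t = t by rewrite clamp01_id // (ltW t0).
have avoid m w : w <= 1 -> (m != i \/ w < t) -> ~ arm_segment m 0 w (arm i t).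
  move=> w1 hm [w' /andP[w'0 w'w] /esym/arm_inj].
  rewrite clt clamp01_id ?w'0 ?(le_trans w'w) // => /(_ t0)[mi tw'].
  case: hm => [|wt]; first by rewrite mi eqxx.
  by move: (le_lt_trans w'w wt); rewrite tw' ltxx.
have [j0 js] := arm_segment0 j s0; have [k0 kr] := arm_segment0 k r0.
apply: Ub; apply: (side (arm_segment k 0 r) (arm k 0)) => //.
- exact: arm_segment_connected.
- exact: avoid r1 hk.
rewrite (arm0 k j); apply: (side (arm_segment j 0 s) (arm j s)) => //.
- exact: arm_segment_connected.
- exact: avoid s1 hj.
Qed.

Lemma open_entry_gt k c : open [set z : T | c < val z 0 k].
Proof. by have := proj1 (continuousP _) (@continuous_val_entry k) _ (@open_gt _ c). Qed.

Lemma open_entry_lt k c : open [set z : T | val z 0 k < c].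
Proof. by have := proj1 (continuousP _) (@continuous_val_entry k) _ (@open_lt _ c). Qed.

Lemma not_separates_above i t s r : 0 < t -> t < s <= 1 -> t < r <= 1 ->
  ~ separates (arm i t) (arm i s) (arm i r).
Proof.
move=> t0 /andP[ts s1] /andP[tr r1] /separates_side[U [Ua Ub side]].
have tm : t < Num.min s r by rewrite lt_min ts tr.
apply: Ub; apply: (side (arm_segment i (Num.min s r) 1) (arm i s)) => //.
- exact: arm_segment_connected.
- move=> [w /andP[mw w1] /esym/arm_inj].
  have wt : t < w := lt_le_trans tm mw.
  have ct : clamp01 t = t by apply: clamp01_id; rewrite (ltW t0) (ltW (lt_le_trans ts s1)).
  have cw : clamp01 w = w by apply: clamp01_id; rewrite w1 (ltW (lt_trans t0 wt)).
  by rewrite ct cw => /(_ t0)[_ tw]; move: wt; rewrite tw ltxx.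
- by apply: arm_segment_mem; rewrite s1 ge_min lexx.
- by apply: arm_segment_mem; rewrite r1 ge_min lexx orbT.
Qed.

Lemma separates_arm_interior i t : 0 < t < 1 -> separates (arm i t) (arm i 1) (arm i 0).
Proof.
move=> /andP[t0 t1].
exists [set z : T | t < val z 0 i], [set z : T | val z 0 i < t].
split; [exact: open_entry_gt|exact: open_entry_lt| | |].
- by apply/seteqP; split => // z [/= h1 h2]; move: (lt_trans h1 h2); rewrite ltxx.
- move=> z zx; have [j [s [s01 zE]]] := armP z; rewrite zE in zx *; rewrite /= !arm_entry.
  case: eqP => [ji|_]; last by right.
  rewrite clamp01_id //; case: (ltgtP t s) => [|?|ts]; [by left|by right|].
  by exfalso; apply: zx; rewrite ji ts.
- by rewrite /= !arm_entry eqxx clamp01_0 clamp01_1.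
Qed.

Lemma separates_origin j k : j != k -> separates (arm j 0) (arm j 1) (arm k 1).
Proof.
move=> jk.
exists [set z : T | 0 < val z 0 j],
  (\bigcup_(l in [set l | l != j]) [set z : T | 0 < val z 0 l]).
split; [exact: open_entry_gt|by apply: bigcup_open => l _; exact: open_entry_gt| | |].
- apply/seteqP; split => // z [/= h1 [l /= lj h2]].
  have [m [s [s01 zE]]] := armP z; move: h1 h2; rewrite zE !arm_entry.
  have [jm|jm] := eqVneq j m; last by rewrite ltxx.
  by rewrite -jm (negbTE lj) ltxx.
- move=> z zx; have [m [s [s01 zE]]] := armP z.
  have s0 : 0 < s.
    rewrite lt_neqAle; case/andP: s01 => -> _; rewrite andbT; apply/eqP => s0.
    by apply: zx; rewrite zE -s0 (arm0 m j).
  have cs : clamp01 s = s by rewrite clamp01_id.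
  have [mj|mj] := eqVneq m j; [left|right].
  + by rewrite /= zE arm_entry mj eqxx cs.
  + by exists m => //=; rewrite zE arm_entry eqxx cs.
- split; first by rewrite /= arm_entry eqxx clamp01_1.
  by exists k; [rewrite /= eq_sym|rewrite /= arm_entry eqxx clamp01_1].
Qed.

Lemma endpoint_not_separates j a b : a <> arm j 1 -> b <> arm j 1 ->
  ~ separates (arm j 1) a b.
Proof.
move=> ha hb.
have [k [s [s01 aE]]] := armP a; have [l [r [r01 bE]]] := armP b.
have below m w : 0 <= w <= 1 -> arm m w <> arm j 1 -> m != j \/ w < 1.
  move=> /andP[_ w1] mw; have [mj|] := eqVneq m j; [right|by left].
  by rewrite lt_neqAle w1 andbT; apply: contra_notN mw => /eqP->; rewrite mj.
rewrite aE bE; apply: not_separates_below; rewrite ?ltr01 ?lexx //.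
- by apply: below; rewrite // -aE.
- by apply: below; rewrite // -bE.
Qed.

End star_arms.

Section star_maps.
Variables (R : realType) (n : nat).
Local Notation T := (star R n).
Local Notation V := 'rV[R]_n.
Implicit Types (i j k : 'I_n) (s t : R).

Definition star_map (F : V -> V) (HF : forall y, star_set y -> star_set (F y)) (z : T) : T :=
  exist _ (F (val z)) (mem_set (HF _ (set_mem (valP z)))).

Lemma continuous_star_map F HF : continuous F -> continuous (@star_map F HF).
Proof.
move=> cF; apply: continuous_comp_initial => z.
have cval : continuous (val : T -> V) by exact: initial_continuous.
exact: (continuous_comp (cval z) (cF (val z))).
Qed.

Lemma homeo_star_map (F G : V -> V) HF (HG : forall y, star_set y -> star_set (G y)) :
  continuous F -> continuous G -> cancel F G -> cancel G F -> homeo (@star_map F HF).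
Proof.
move=> cF cG FG GF; split; first exact: continuous_star_map.
exists (star_map HG); split; last exact: continuous_star_map.
- by move=> z; apply: val_inj; rewrite /= FG.
- by move=> z; apply: val_inj; rewrite /= GF.
Qed.

Lemma continuous_addZ (u : V -> V) (a : V -> R) (v : V) :
  continuous u -> continuous a -> continuous (fun y => u y + a y *: v).
Proof.
move=> cu ca y.
exact: (@continuousD R V V u (fun y => a y *: v) y (cu y) (@continuousZr_tmp _ _ _ a v y (ca y))).
Qed.

Definition swap_entries i j (y : V) : V :=
  y + (y 0 j - y 0 i) *: delta_mx 0 i + (y 0 i - y 0 j) *: delta_mx 0 j.

Lemma swap_entries_entry i j y l : i != j -> swap_entries i j y 0 l =
  if l == i then y 0 j else if l == j then y 0 i else y 0 l.
Proof.
move=> ij; rewrite /swap_entries !mxE eqxx /=.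
have [->|li] := eqVneq l i; first by rewrite (negbTE ij) /=; ring.
by have [->|lj] := eqVneq l j => /=; ring.
Qed.

Lemma swap_entriesK i j : involutive (swap_entries i j).
Proof.
move=> y; have [<-|ij] := eqVneq i j; first by rewrite /swap_entries !subrr !scale0r !addr0.
apply/rowP => l; rewrite !swap_entries_entry // (eq_sym j i) (negbTE ij) !eqxx.
have [->|li] := eqVneq l i; first by rewrite ?eqxx.
by have [->|lj] := eqVneq l j; rewrite ?eqxx.
Qed.

Local Ltac case_eqs := do 8? (case: eqP => [?|?]; try subst) => //.

Lemma swap_entries_arm i j k (c : R) :
  swap_entries i j (c *: delta_mx 0 k) = c *: delta_mx 0 (tperm i j k).
Proof.
have [<-|ij] := eqVneq i j; first by rewrite tperm1 perm1 /swap_entries subrr !scale0r !addr0.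
apply/rowP => l; rewrite swap_entries_entry // !scale_delta_entry.
have [->|ki] := eqVneq k i; first by rewrite tpermL; move: ij; case_eqs.
have [->|kj] := eqVneq k j; first by rewrite tpermR; move: ij; case_eqs.
by rewrite tpermD 1?eq_sym //; move: ij ki kj; case_eqs.
Qed.

Lemma swap_entries_star i j y : star_set y -> star_set (swap_entries i j y).
Proof. by move=> [k [c [c01 ->]]]; rewrite swap_entries_arm; exists (tperm i j k), c. Qed.

Lemma continuous_swap_entries i j : continuous (swap_entries i j).
Proof.
have entryB k l : continuous (fun y : V => y 0 k - y 0 l).
  by move=> y; apply: continuousB; apply: coord_continuous.
by do 2 apply: continuous_addZ => //; move=> y; exact: cvg_id.
Qed.

Definition swap_arms i j : T -> T := star_map (@swap_entries_star i j).

Lemma homeo_swap_arms i j : homeo (swap_arms i j).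
Proof.
apply: (homeo_star_map (@swap_entries_star i j) (@swap_entries_star i j)).
- exact: continuous_swap_entries.
- exact: continuous_swap_entries.
- exact: swap_entriesK.
- exact: swap_entriesK.
Qed.

Lemma swap_arms_arm i j t : swap_arms i j (arm i t) = arm j t.
Proof. by apply: val_inj; rewrite /= swap_entries_arm tpermL. Qed.

Definition stretch s t i (y : V) : V := y + (pwlin s t (y 0 i) - y 0 i) *: delta_mx 0 i.

Section stretch.
Variables (s t : R).
Hypotheses (hs : 0 < s < 1) (ht : 0 < t < 1).

Lemma stretch_entry i y : stretch s t i y 0 i = pwlin s t (y 0 i).
Proof. by rewrite /stretch !mxE !eqxx /= mulr1 addrC subrK. Qed.

Lemma stretchK i : cancel (stretch s t i) (stretch t s i).
Proof.
move=> y; rewrite {1}/stretch stretch_entry pwlinK // /stretch -addrA -scalerDl.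
by rewrite addrA subrK subrr scale0r addr0.
Qed.

Lemma stretch_arm_other i k (c : R) : k != i ->
  stretch s t i (c *: delta_mx 0 k) = c *: delta_mx 0 k.
Proof.
by move=> ki; rewrite /stretch scale_delta_entry eq_sym (negbTE ki) pwlin_0 // subrr scale0r addr0.
Qed.

Lemma stretch_arm_same i (c : R) : stretch s t i (c *: delta_mx 0 i) = pwlin s t c *: delta_mx 0 i.
Proof. by rewrite /stretch scale_delta_entry eqxx addrC -scalerDl subrK. Qed.

Lemma stretch_star i y : star_set y -> star_set (stretch s t i y).
Proof.
move=> [k [c [c01 ->]]]; have [->|ki] := eqVneq k i.
- by rewrite stretch_arm_same; exists i, (pwlin s t c); split => //; exact: pwlin_ge0_le1.
- by rewrite stretch_arm_other //; exists k, c.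
Qed.

Lemma continuous_stretch i : continuous (stretch s t i).
Proof.
apply: continuous_addZ; first by move=> y; exact: cvg_id.
move=> y; have py : {for y, continuous (fun y : V => pwlin s t (y 0 i))}.
  by apply: continuous_comp; [exact: coord_continuous|exact: continuous_pwlin].
by have := @continuousB R R^o V _ (fun y => y 0 i) y py (@coord_continuous R 1 n 0 i y); exact.
Qed.

End stretch.

Definition stretch_arm s t (hs : 0 < s < 1) (ht : 0 < t < 1) i : T -> T :=
  star_map (@stretch_star s t hs ht i).

Lemma homeo_stretch_arm s t (hs : 0 < s < 1) (ht : 0 < t < 1) i : homeo (stretch_arm hs ht i).
Proof.
apply: (homeo_star_map (@stretch_star s t hs ht i) (@stretch_star t s ht hs i)).
- exact: continuous_stretch.
- exact: continuous_stretch.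
- exact: stretchK.
- exact: stretchK.
Qed.

Lemma stretch_arm_arm s t (hs : 0 < s < 1) (ht : 0 < t < 1) i :
  stretch_arm hs ht i (arm i s) = arm i t.
Proof.
have [s0 s1] := andP hs; have [t0 t1] := andP ht.
have cs : clamp01 s = s by apply: clamp01_id; rewrite (ltW s0) (ltW s1).
have ct : clamp01 t = t by apply: clamp01_id; rewrite (ltW t0) (ltW t1).
by apply: val_inj; rewrite /= cs ct stretch_arm_same pwlin_s.
Qed.

End star_maps.

Section invariant_sets.
Variables (R : realType) (n : nat) (i0 i1 i2 : 'I_n).
Hypotheses (d01 : i0 != i1) (d02 : i0 != i2) (d12 : i1 != i2).
Local Notation T := (star R n).
Local Notation arm := (@arm R n).
Local Notation origin := (arm i0 0).

Definition endpoints : set T := range (fun j => arm j 1).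

Lemma separates_of_not_endpoint (x : T) : ~ endpoints x ->
  exists a b, [/\ a <> x, b <> x & separates x a b].
Proof.
have [i [t [t01 ->]]] := armP x; move=> xE.
have t1 : t != 1 by apply/eqP => t1; apply: xE; rewrite t1; exists i.
have [->|t0] := eqVneq t 0.
- have [i' ii'] : exists i', i != i'.
    by have [->|] := eqVneq i i0; [exists i1|exists i0].
  exists (arm i 1), (arm i' 1); split; last exact: separates_origin.
  + by apply: arm_neq; rewrite clamp01_1 ?clamp01_0 ?ltr01 ?oner_eq0.
  + by apply: arm_neq; rewrite clamp01_1 ?clamp01_0 ?ltr01 ?oner_eq0.
- have tpos : 0 < t by rewrite lt_neqAle eq_sym t0; case/andP: t01.
  have tlt : t < 1 by rewrite lt_neqAle t1; case/andP: t01.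
  have ct : clamp01 t = t by rewrite clamp01_id.
  exists (arm i 1), (arm i 0); split.
  + by apply: arm_neq; rewrite clamp01_1 ?ct ?ltr01 // eq_sym.
  + by move/esym; apply: arm_neq; rewrite ?ct ?clamp01_0.
  + by apply: separates_arm_interior; rewrite tpos tlt.
Qed.

Lemma homeo_endpoint (f : T -> T) : homeo f -> forall x, endpoints x -> endpoints (f x).
Proof.
move=> hf _ [j _ <-]; apply: contrapT => fxE.
have [a [b [ha hb sab]]] := separates_of_not_endpoint fxE.
have [g [hg fg gf]] := homeoV hf.
have := homeo_separates hg sab; rewrite fg.
by apply: endpoint_not_separates => E; [apply: ha|apply: hb]; rewrite -E gf.
Qed.

Lemma homeo_fixes_origin (f : T -> T) : homeo f -> f origin = origin.
Proof.
move=> hf; apply: contrapT => fo.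
have [i [t [t01 fE]]] := armP (f origin).
have t0 : 0 < t.
  rewrite lt_neqAle; case/andP: t01 => -> _; rewrite andbT; apply/eqP => t0.
  by apply: fo; rewrite fE -t0; exact: arm0.
have t0' : 0 < t <= 1 by rewrite t0; case/andP: t01.
pose below (p : T) := exists m s, [/\ 0 <= s <= 1, p = arm m s & (m != i \/ s < t)].
have above p : ~ below p -> p <> arm i t -> exists s, t < s <= 1 /\ p = arm i s.
  move=> np pt; have [m [s [s01 pE]]] := armP p.
  have [mi|mi] := eqVneq m i; last by exfalso; apply: np; exists m, s; split => //; left.
  have [st|ts] := ltP s t; first by exfalso; apply: np; exists m, s; split => //; right.
  exists s; split; last by rewrite pE mi.
  case/andP: s01 => _ ->; rewrite andbT lt_neqAle ts andbT.
  by apply/eqP => ts'; apply: pt; rewrite pE mi ts'.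
pose p k := f (arm k 1).
have p_sep j k : j != k -> separates (arm i t) (p j) (p k).
  by move=> jk; rewrite -fE (arm0 _ i0 j); exact: homeo_separates hf (separates_origin R jk).
have p_ne k : p k <> arm i t.
  move=> E; have [g [_ fg _]] := homeoV hf; move: (congr1 g E); rewrite /p -fE !fg.
  by apply: arm_neq; rewrite clamp01_1 ?clamp01_0 ?ltr01 ?oner_eq0.
(* the complement of arm i t has two sides, so two of the three endpoint
   images lie on the same side, yet the origin separates their preimages *)
have same_side j k : j != k -> (below (p j) <-> below (p k)) -> False.
  move=> jk [jk' kj]; have := p_sep j k jk.
  have [bj|bj] := pselect (below (p j)).
  - have [m [s [s01 -> hm]]] := bj; have [m' [s' [s'01 -> hm']]] := jk' bj.
    exact: not_separates_below.
  - have bk : ~ below (p k) by move/kj.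
    have [s [s01 ->]] := above _ bj (p_ne j); have [s' [s'01 ->]] := above _ bk (p_ne k).
    exact: not_separates_above.
have := same_side i0 i1 d01; have := same_side i0 i2 d02; have := same_side i1 i2 d12.
by move: (EM (below (p i0))) (EM (below (p i1))) (EM (below (p i2))); tauto.
Qed.

Lemma closed_origin : closed [set origin].
Proof.
apply: set_type_finite_closed; last exact: finite_set1.
exact: hausdorff_accessible (@norm_hausdorff _ _).
Qed.

Lemma closed_origin_endpoints : closed ([set origin] `|` endpoints).
Proof.
apply: set_type_finite_closed; first exact: hausdorff_accessible (@norm_hausdorff _ _).
by rewrite finite_setU; split; [exact: finite_set1|exact: finite_image finite_finset].
Qed.

Lemma height_ge2 (G : set (T -> T)) : homeo_subgroup G -> height_ge G 2%N.
Proof.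
case=> hG _ _ _; exists 2%N; split => //.
exists (fun k => if k == 0%N then [set origin]
                 else if k == 1%N then [set origin] `|` endpoints else setT).
split => //.
- case=> [|[|[|k]]] // _ /=.
  + split; first exact: closed_origin.
    split; first by exists origin.
    by move=> g y /hG /homeo_fixes_origin fo ->.
  + split; first exact: closed_origin_endpoints.
    split; first by exists origin; left.
    move=> g y /hG hg [->|Ey]; first by left; exact: homeo_fixes_origin.
    by right; exact: homeo_endpoint.
  + by split; [exact: closedT|split; first exists origin].
- have h0 : 0 < 2^-1 :> R by lra.
  have h1 : 2^-1 < 1 :> R by lra.
  have ch : clamp01 2^-1 = 2^-1 :> R by rewrite clamp01_id // !ltW.
  have e1 : arm i0 1 <> origin by apply: arm_neq; rewrite clamp01_1 ?clamp01_0 ?ltr01 ?oner_eq0.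
  have e2 : arm i0 2^-1 <> origin by apply: arm_neq; rewrite ch ?clamp01_0 ?gt_eqF.
  have e3 j : arm j 1 <> arm i0 2^-1.
    by move/esym; apply: arm_neq; rewrite ch ?clamp01_1 ?lt_eqF.
  case=> [|[|k]] // _ /=.
  + split; first by move=> z; left.
    by move=> sub; have /sub/e1 : ([set origin] `|` endpoints) (arm i0 1) by right; exists i0.
  + by split => // sub; have /sub[/e2[]|[j _ /e3[]]] : [set: T] (arm i0 2^-1).
Qed.

Lemma Homeo_invariant_interior (Y : set T) i s : closed Y -> Defs.invariant (@Homeo T) Y ->
  0 < s < 1 -> Y (arm i s) -> Y = setT.
Proof.
move=> cY [_ inv] hs Ys.
have Yint k r : 0 < r < 1 -> Y (arm k r).
  move=> hr; have := inv _ _ (homeo_stretch_arm hs hr i) Ys; rewrite stretch_arm_arm => Yir.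
  by have := inv _ _ (homeo_swap_arms R i k) Yir; rewrite swap_arms_arm.
apply/seteqP; split => // z _; apply: contrapT => nYz; have [k [r [r01 zE]]] := armP z.
have oO : open (arm k @^-1` (~` Y)).
  exact: (proj1 (continuousP _) (@continuous_arm R n k) _ (closed_openC cY)).
have nYr : (arm k @^-1` (~` Y)) r by rewrite /= -zE.
have [r' [hr' nYr']] := open_meets_oo01 oO nYr r01.
by apply: nYr'; exact: Yint.
Qed.

Lemma proper_invariant_subset (Y : set T) : closed Y -> Defs.invariant (@Homeo T) Y ->
  Y <> setT -> Y `<=` [set origin] `|` endpoints.
Proof.
move=> cY iY YT z Yz; have [j [s [s01 zE]]] := armP z.
have [s0|s0] := eqVneq s 0; first by left; rewrite zE s0; exact: arm0.
have [s1|s1] := eqVneq s 1; first by right; exists j => //; rewrite zE s1.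
have Yjs : Y (arm j s) by rewrite -zE.
exfalso; apply: YT; apply: Homeo_invariant_interior cY iY _ Yjs.
by rewrite !lt_neqAle eq_sym s0 s1; case/andP: s01 => -> ->.
Qed.

Lemma invariant_endpoint (Y : set T) j k : Defs.invariant (@Homeo T) Y ->
  Y (arm j 1) -> Y (arm k 1).
Proof. by move=> [_ inv] /(inv _ _ (homeo_swap_arms R j k)); rewrite swap_arms_arm. Qed.

(* A proper closed invariant set is determined by which of the origin and the
   endpoints it contains; [invariant_rank] counts these two kinds of points. *)
Definition invariant_rank (Y : set T) : nat := (`[< Y origin >] + `[< Y (arm i0 1) >])%N.

Lemma invariant_rank_gt0 (Y : set T) : closed Y -> Defs.invariant (@Homeo T) Y ->
  Y <> setT -> (0 < invariant_rank Y)%N.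
Proof.
move=> cY iY YT; have [w Yw] := iY.1.
have [wE|[j _ wE]] := proper_invariant_subset cY iY YT Yw.
  by rewrite /invariant_rank asboolT // -wE.
have Yj : Y (arm j 1) by rewrite wE.
by rewrite /invariant_rank addnC asboolT //; exact: invariant_endpoint i0 iY Yj.
Qed.

Lemma invariant_rank_lt (Y Y' : set T) : closed Y' -> Defs.invariant (@Homeo T) Y ->
  Defs.invariant (@Homeo T) Y' -> Y' <> setT -> Y `<` Y' ->
  (invariant_rank Y < invariant_rank Y')%N.
Proof.
move=> cY' iY iY' Y'T [YY' Y'Y].
have /set0P[w [Y'w Yw]] : Y' `\` Y != set0 by apply/eqP; rewrite setD_eq0.
rewrite /invariant_rank.
have [wE|[j _ wE]] := proper_invariant_subset cY' iY' Y'T Y'w.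
- rewrite wE in Yw Y'w; rewrite (asboolF Yw) (asboolT Y'w) add0n add1n ltnS.
  by case: asboolP => // /YY' ?; rewrite asboolT.
- rewrite -wE in Yw Y'w.
  have Y'e : Y' (arm i0 1) by exact: invariant_endpoint i0 iY' Y'w.
  have Ye : ~ Y (arm i0 1) by move/(invariant_endpoint j iY).
  rewrite (asboolF Ye) (asboolT Y'e) addn0 addn1 ltnS.
  by case: asboolP => // /YY' ?; rewrite asboolT.
Qed.

Lemma has_chain_Homeo_le2 m : has_chain (@Homeo T) m -> (m <= 2)%N.
Proof.
move=> [Y [hY hlt hm]]; rewrite leqNgt; apply/negP => m3.
have ci k : (k <= 2)%N -> closed (Y k) /\ Defs.invariant (@Homeo T) (Y k).
  by move=> k2; apply: hY; apply: leq_trans k2 (ltnW m3).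
have proper k : (k < m)%N -> Y k <> setT.
  by move=> km YkT; have [_ []] := hlt k km; rewrite YkT; exact: subsetT.
have [c0 i0'] := ci 0%N isT; have [c1 i1'] := ci 1%N isT; have [c2 i2'] := ci 2%N isT.
have m0 : (0 < m)%N by lia.
have m1 : (1 < m)%N by lia.
have r0 := invariant_rank_gt0 c0 i0' (proper 0%N m0).
have r1 := invariant_rank_lt c1 i0' i1' (proper 1%N m1) (hlt 0%N m0).
have r2 := invariant_rank_lt c2 i1' i2' (proper 2%N m3) (hlt 1%N m1).
have : (invariant_rank (Y 2%N) <= 2)%N by rewrite /invariant_rank; case: asboolP; case: asboolP.
lia.
Qed.

End invariant_sets.

Theorem lemma4p1 (R : realType) (n : nat) : (3 <= n)%N ->
  (forall G : set (star R n -> star R n), homeo_subgroup G -> height_ge G 2) /\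
  height_eq (@Homeo (star R n)) 2.
Proof.
move=> n3; have ltn3 k : (k < 3)%N -> (k < n)%N by move/leq_trans; apply.
pose o k (k3 : (k < 3)%N) : 'I_n := Ordinal (ltn3 k k3).
have d01 : o 0%N isT != o 1%N isT by [].
have d02 : o 0%N isT != o 2%N isT by [].
have d12 : o 1%N isT != o 2%N isT by [].
split; first by move=> G; exact: (height_ge2 d01 d02 d12 (G := G)).
split; first exact: (height_ge2 d01 d02 d12 (@homeo_subgroup_Homeo (star R n))).
exact: has_chain_Homeo_le2 d01 d02 d12.
Qed.
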